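(* Let $\mathbb{K}$ be an algebraically closed field of characteristic zero and $Y$ an irreducible affine variety. If the ideal $I\subseteq\mathbb{K}[Y]$ generated by the images $\partial(\mathbb{K}[Y])$ of all locally nilpotent derivations $\partial$ of $\mathbb{K}[Y]$ equals $\mathbb{K}[Y]$, then $Y$ is of type A, i.e. $\mathrm{HD}^*(Y\times\mathbb{A}^1)=\mathbb{K}[Y\times\mathbb{A}^1]$.
   Context: A derivation is locally nilpotent (LND) if every element is killed by some power of it. A slice of an LND $\partial$ is an element $s$ with $\partial(s)=1$. For an affine variety $X$, $\mathrm{HD}^*(X)$ is the $\mathbb{K}$-subalgebra of $\mathbb{K}[X]$ generated by the kernels of all LNDs of $\mathbb{K}[X]$ that have a slice. *)

From HB Require Import structures.
From mathcomp Require Import all_boot all_order all_algebra.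
Set Implicit Arguments. Unset Strict Implicit. Unset Printing Implicit Defensive.
Import GRing.Theory.
Local Open Scope ring_scope.

(* Algebras over a field K are represented as commutative rings R together
   with a structure ring morphism phi : K -> R. *)

Inductive subalg_gen (K : fieldType) (R : comNzRingType) (phi : K -> R)
    (S : R -> Prop) : R -> Prop :=
  | sg_scalar k : subalg_gen phi S (phi k)
  | sg_gen x : S x -> subalg_gen phi S x
  | sg_add x y : subalg_gen phi S x -> subalg_gen phi S y -> subalg_gen phi S (x + y)
  | sg_mul x y : subalg_gen phi S x -> subalg_gen phi S y -> subalg_gen phi S (x * y).

Inductive ideal_gen (R : comNzRingType) (S : R -> Prop) : R -> Prop :=
  | ig_zero : ideal_gen S 0
  | ig_gen x : S x -> ideal_gen S x
  | ig_add x y : ideal_gen S x -> ideal_gen S y -> ideal_gen S (x + y)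
  | ig_mul r x : ideal_gen S x -> ideal_gen S (r * x).

Definition fin_gen_alg (K : fieldType) (R : comNzRingType) (phi : K -> R) : Prop :=
  exists s : seq R, forall x : R, subalg_gen phi (fun y => y \in s) x.

Definition is_Kder (K : fieldType) (R : comNzRingType) (phi : K -> R)
    (D : R -> R) : Prop :=
  [/\ forall x y, D (x + y) = D x + D y,
      forall x y, D (x * y) = x * D y + y * D x
    & forall k x, D (phi k * x) = phi k * D x].

Definition is_LND (K : fieldType) (R : comNzRingType) (phi : K -> R)
    (D : R -> R) : Prop :=
  is_Kder phi D /\ forall x, exists n : nat, iter n D x = 0.

Definition is_slice (R : comNzRingType) (D : R -> R) (s : R) : Prop := D s = 1.

Definition HDstar (K : fieldType) (R : comNzRingType) (phi : K -> R) : R -> Prop :=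
  subalg_gen phi (fun x => exists D, [/\ is_LND phi D, exists s, is_slice D s & D x = 0]).

Definition LND_image_ideal (K : fieldType) (R : comNzRingType) (phi : K -> R) : R -> Prop :=
  ideal_gen (fun y => exists D x, is_LND phi D /\ y = D x).

From mathcomp Require Import all_boot all_order all_algebra.
From mathcomp Require Import ring.
Set Implicit Arguments. Unset Strict Implicit.
Import GRing.Theory.
Local Open Scope ring_scope.

(* Every LND [d] of [A] extends to the LND [D = d + d/dX] of [A[X]], which has
   the slice [X] and kills [exp(-X d) a = sum_k (-1)^k/k! d^k(a) X^k] for every
   [a].  Replacing [d] by [l d] for [l] in [K] multiplies the k-th term by [l^k];
   since char K = 0 there are enough distinct [l] to invert a Vandermonde
   matrix, so each term lies in HD*.  The terms k = 0 and k = 1 give [a] and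
   [d(a) X], hence [I X] is in HD*; as [1] is in [I], so is [X], and thus all
   of [A[X]]. *)

Lemma mem_coef_of_mem_evals (K : fieldType) (hchar : [pchar K] =i pred0)
    (R : comNzRingType) (f : {rmorphism K -> R}) (S : R -> Prop) (S0 : S 0)
    (SD : forall x y, S x -> S y -> S (x + y))
    (SZ : forall k x, S x -> S (f k * x)) (n : nat) (C : 'I_n -> R) :
  (forall l, S (\sum_(k < n) f l ^+ k * C k)) -> forall i, S (C i).
Proof.
move=> S_evals i.
pose V := Vandermonde n (\row_(j < n) (j%:R : K)).
have V_unit : V \in unitmx.
  rewrite unitmxE unitfE det_Vandermonde; apply/prodf_neq0 => i0 _.
  apply/prodf_neq0 => j hij; rewrite !mxE -natrB ?(ltnW hij) //.
  by rewrite ((pcharf0P K).1 hchar) subn_eq0 -ltnNge.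
have -> : C i = \sum_(j < n) f (invmx V j i) * (\sum_(k < n) f j%:R ^+ k * C k).
  transitivity (\sum_(k < n) f ((V *m invmx V) k i) * C k).
    rewrite mulmxV // (bigD1 i) //= big1 ?addr0; first by rewrite mxE eqxx rmorph1 mul1r.
    by move=> k hk; rewrite mxE (negbTE hk) rmorph0 mul0r.
  under eq_bigr => k _ do rewrite mxE rmorph_sum big_distrl.
  rewrite exchange_big /=; apply: eq_bigr => j _; rewrite big_distrr.
  apply: eq_bigr => k _; rewrite /V /Vandermonde !mxE rmorphM rmorphXn.
  by rewrite -mulrA mulrCA.
by apply: (big_ind S) => // j _; apply: SZ.
Qed.

Section Derivations.

Variables (K : fieldType) (R : comNzRingType) (phi : K -> R) (d : R -> R).
Hypothesis d_Kder : is_Kder phi d.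

Lemma Kder0 : d 0 = 0.
Proof. by case: d_Kder => dD _ _; apply: (@addrI _ (d 0)); rewrite -dD !addr0. Qed.

Lemma Kder1 : d 1 = 0.
Proof.
case: d_Kder => _ dM _; apply: (@addrI _ (d 1)).
by have := dM 1 1; rewrite !mul1r addr0 => <-.
Qed.

Lemma Kder_mulrn x m : d (x *+ m) = d x *+ m.
Proof.
case: d_Kder => dD _ _.
elim: m => [|m IH]; first by rewrite !mulr0n Kder0.
by rewrite !mulrS dD IH.
Qed.

Lemma iter_KderD n x y : iter n d (x + y) = iter n d x + iter n d y.
Proof. by case: d_Kder => dD _ _; elim: n x y => //= n IH x y; rewrite IH dD. Qed.

Lemma iter_Kder_mulrn n x m : iter n d (x *+ m) = iter n d x *+ m.
Proof. by elim: n x => //= n IH x; rewrite IH Kder_mulrn. Qed.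

Lemma iter_Kder_eq0_leq n k x : iter n d x = 0 -> (n <= k)%N -> iter k d x = 0.
Proof.
move=> dnx0 le_nk; rewrite -(subnK le_nk) iterD dnx0.
by elim: (k - n)%N => //= j ->; rewrite Kder0.
Qed.

End Derivations.

Lemma is_LND_zero (K : fieldType) (R : comNzRingType) (phi : K -> R) :
  is_LND phi (fun _ => 0).
Proof.
split; last by move=> x; exists 1%N.
by split=> *; rewrite ?mulr0 ?addr0.
Qed.

Lemma LND_uniform_nilpotence (K : fieldType) (R : comNzRingType) (phi : K -> R)
    (d : R -> R) (s : seq R) :
  is_LND phi d -> exists M, forall x, x \in s -> iter M d x = 0.
Proof.
case=> d_Kder d_nil; elim: s => [|y s [M IH]]; first by exists 0%N.
have [n dny0] := d_nil y; exists (maxn M n) => x; rewrite inE => /predU1P[->|xs].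
  exact: (iter_Kder_eq0_leq d_Kder dny0 (leq_maxr M n)).
exact: (iter_Kder_eq0_leq d_Kder (IH x xs) (leq_maxl M n)).
Qed.

Section ScaledDerivation.

Variables (K : fieldType) (R : comNzRingType) (phi : {rmorphism K -> R}).
Variables (d : R -> R) (l : K).

Definition scale_der (x : R) : R := phi l * d x.

Lemma is_Kder_scale : is_Kder phi d -> is_Kder phi scale_der.
Proof.
case=> dD dM dK; split=> [x y|x y|k x]; rewrite /scale_der.
- by rewrite dD mulrDr.
- by rewrite dM mulrDr mulrCA (mulrCA (phi l) y).
- by rewrite dK mulrCA.
Qed.

Lemma iter_scale_der : is_Kder phi d ->
  forall n x, iter n scale_der x = phi l ^+ n * iter n d x.
Proof.
case=> _ _ dK; elim=> [|n IH] x /=; first by rewrite mul1r.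
by rewrite IH /scale_der -rmorphXn dK rmorphXn exprS mulrA.
Qed.

Lemma is_LND_scale : is_LND phi d -> is_LND phi scale_der.
Proof.
case=> d_Kder d_nil; split; first exact: is_Kder_scale.
by move=> x; have [n dnx0] := d_nil x; exists n; rewrite iter_scale_der // dnx0 mulr0.
Qed.

End ScaledDerivation.

Definition der_polyX (R : comNzRingType) (d : R -> R) (p : {poly R}) : {poly R} :=
  map_poly d p + p^`().

Section PolynomialExtension.

Variables (K : fieldType) (R : comNzRingType) (phi : {rmorphism K -> R}).
Variable d : R -> R.

Lemma coef_der_polyX : d 0 = 0 ->
  forall p i, (der_polyX d p)`_i = d p`_i + p`_i.+1 *+ i.+1.
Proof. by move=> d0 p i; rewrite coefD coef_map_id0 // coef_deriv. Qed.

Lemma map_poly_KderM : is_Kder phi d -> forall p q : {poly R},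
  map_poly d (p * q) = p * map_poly d q + q * map_poly d p.
Proof.
move=> d_Kder p q; have [dD dM _] := d_Kder; have d0 := Kder0 d_Kder.
apply/polyP => i; rewrite coefD coef_map_id0 // (coefM p q) (coefM p) (coefMr q).
rewrite (big_morph d dD d0) -big_split; apply: eq_bigr => j _.
by rewrite dM !coef_map_id0.
Qed.

Lemma is_Kder_der_polyX : is_Kder phi d -> is_Kder (polyC \o phi) (der_polyX d).
Proof.
move=> d_Kder; have [dD _ dK] := d_Kder; have d0 := Kder0 d_Kder.
split=> [x y|x y|k x].
- apply/polyP => i; rewrite (coef_der_polyX d0 (x + y)) (coefD (der_polyX d x)).
  rewrite (coef_der_polyX d0 x) (coef_der_polyX d0 y).
  by rewrite !coefD dD mulrnDl addrACA.
- rewrite /der_polyX derivM map_poly_KderM // !mulrDr (mulrC y (x^`())).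
  by rewrite [in RHS]addrACA [x * y^`() + _]addrC.
- apply/polyP => i; rewrite (coef_der_polyX d0 (_ * x)) !coefCM (coef_der_polyX d0 x).
  by rewrite dK mulrDr mulrnAr.
Qed.

Lemma der_polyX_X : is_Kder phi d -> der_polyX d 'X = 1.
Proof.
move=> d_Kder; have d0 := Kder0 d_Kder.
apply/polyP => i; rewrite coef_der_polyX // !coefX coef1.
by case: i => [|[|i]] /=; rewrite ?mulr0n ?mulr1n ?d0 ?(Kder1 d_Kder) ?mul0rn ?add0r ?addr0.
Qed.

Lemma iter_der_polyX_eq0 : is_Kder phi d ->
  forall N (p : {poly R}), (forall i, iter (N - i) d p`_i = 0) -> iter N (der_polyX d) p = 0.
Proof.
move=> d_Kder N; have d0 := Kder0 d_Kder.
elim: N => [|N IH] p p_bound.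
  by apply/polyP => i; rewrite coef0; have := p_bound i; rewrite sub0n.
rewrite iterSr; apply: IH => i; rewrite coef_der_polyX // (iter_KderD d_Kder).
rewrite (iter_Kder_mulrn d_Kder); have := p_bound i.+1; rewrite subSS => ->.
rewrite mul0rn addr0 -iterSr; case: (leqP i N) => [le_iN|lt_Ni].
  by rewrite -subSn ?p_bound.
have := p_bound i; rewrite !(eqP (ltnW lt_Ni)) (eqP lt_Ni) /= => ->.
exact: Kder0 d_Kder.
Qed.

Lemma is_LND_der_polyX : is_LND phi d -> is_LND (polyC \o phi) (der_polyX d).
Proof.
move=> d_LND; have [d_Kder _] := d_LND; split; first exact: is_Kder_der_polyX.
move=> p; have [M coefs_nil] := LND_uniform_nilpotence p d_LND.
exists (M + size p)%N; apply: iter_der_polyX_eq0 => // i.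
case: (ltnP i (size p)) => [lt_ip|le_pi].
  apply: (iter_Kder_eq0_leq d_Kder (coefs_nil _ (mem_nth 0 lt_ip))).
  by rewrite -addnBA ?leq_addr // ltnW.
rewrite nth_default //; elim: (_ - i)%N => //= j ->; exact: Kder0 d_Kder.
Qed.

End PolynomialExtension.

Definition exp_coef (K : fieldType) (k : nat) : K := (-1) ^+ k / k`!%:R.

(* The truncation at [N] of [exp(-X d) a]; it is the whole series when [d^N a = 0]. *)
Definition exp_der (K : fieldType) (R : comNzRingType) (phi : K -> R) (d : R -> R)
  (a : R) (N : nat) : {poly R} := \poly_(k < N) (phi (exp_coef K k) * iter k d a).

Lemma exp_coefS (K : fieldType) (hchar : [pchar K] =i pred0) i :
  exp_coef K i.+1 *+ i.+1 = - exp_coef K i.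
Proof.
have fact_neq0 : (i`!%:R : K) != 0.
  by rewrite ((pcharf0P K).1 hchar) -lt0n fact_gt0.
have Sn_neq0 : (i.+1%:R : K) != 0 by rewrite ((pcharf0P K).1 hchar).
rewrite /exp_coef factS natrM invfM exprS -mulr_natr.
by field; rewrite fact_neq0 addrC natr1 Sn_neq0.
Qed.

Lemma der_polyX_exp_der (K : fieldType) (hchar : [pchar K] =i pred0)
    (R : comNzRingType) (phi : {rmorphism K -> R}) (d : R -> R) a N :
  is_Kder phi d -> iter N d a = 0 -> der_polyX d (exp_der phi d a N) = 0.
Proof.
move=> d_Kder dNa0; have [_ _ dK] := d_Kder; have d0 := Kder0 d_Kder.
apply/polyP => i; rewrite coef_der_polyX // !coef_poly coef0.
case: (ltnP i.+1 N) => [lt_iN|le_Ni].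
  rewrite (ltnW lt_iN) dK -iterS -mulrnAl -rmorphMn exp_coefS // rmorphN.
  by rewrite mulNr addrN.
rewrite mul0rn addr0; case: ifP => [lt_iN|_]; last by rewrite d0.
have Si_eqN : i.+1 = N by apply/eqP; rewrite eqn_leq lt_iN le_Ni.
by rewrite dK -iterS Si_eqN dNa0 mulr0.
Qed.

Section HDstarOfCylinder.

Variable K : fieldType.
Hypothesis hchar : [pchar K] =i pred0.
Variables (A : comNzRingType) (phi : {rmorphism K -> A}).

Local Notation HD := (HDstar (polyC \o phi)).

Lemma HDstar0 : HD 0.
Proof. by rewrite -polyC0 -(rmorph0 phi); apply: sg_scalar. Qed.

Lemma HDstar_scale k p : HD p -> HD ((phi k)%:P * p).
Proof. by apply: sg_mul; apply: (sg_scalar _ _ k). Qed.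

Lemma HDstar_ker_der_polyX d p : is_LND phi d -> der_polyX d p = 0 -> HD p.
Proof.
move=> d_LND Dp0; apply: sg_gen; exists (der_polyX d); split=> //.
- exact: is_LND_der_polyX.
- by exists 'X; apply: der_polyX_X d_LND.1.
Qed.

Lemma HDstar_exp_der_term d a N (i : 'I_N) :
  is_LND phi d -> iter N d a = 0 ->
  HD ((phi (exp_coef K i) * iter i d a)%:P * 'X^i).
Proof.
move=> d_LND dNa0; have d_Kder := d_LND.1.
pose C (k : 'I_N) := (phi (exp_coef K k) * iter k d a)%:P * 'X^k.
apply: (@mem_coef_of_mem_evals K hchar _ (polyC \o phi) _ HDstar0
  (fun _ _ => @sg_add _ _ _ _ _ _) HDstar_scale N C) => l.
have -> : \sum_(k < N) (polyC \o phi) l ^+ k * C k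
    = exp_der phi (scale_der phi d l) a N.
  rewrite /exp_der poly_def; apply: eq_bigr => k _.
  rewrite iter_scale_der // /C /= -mul_polyC !polyCM rmorphXn.
  by rewrite mulrA mulrCA.
apply: (HDstar_ker_der_polyX (is_LND_scale l d_LND)).
apply: der_polyX_exp_der => //; first exact: is_Kder_scale.
by rewrite iter_scale_der // dNa0 mulr0.
Qed.

Lemma HDstar_polyC a : HD a%:P.
Proof.
apply: (HDstar_ker_der_polyX (is_LND_zero phi)); apply/polyP => i.
by rewrite coef_der_polyX // coefC coef0 mul0rn addr0.
Qed.

Lemma HDstar_LND_mulX d x : is_LND phi d -> HD ((d x)%:P * 'X).
Proof.
move=> d_LND; have [n dnx0] := d_LND.2 x.
have dx0 : iter n.+2 d x = 0.
  by apply: (iter_Kder_eq0_leq d_LND.1 dnx0); rewrite ltnW.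
have := HDstar_scale (-1) (HDstar_exp_der_term (Ordinal (isT : 1 < n.+2)%N) d_LND dx0).
rewrite /exp_coef /= expr1 mulr1n invr1 mulr1 rmorphN1 mulN1r.
by rewrite !polyCN polyC1 mulN1r mulNr opprK.
Qed.

Lemma HDstar_LND_image_mulX y : LND_image_ideal phi y -> HD (y%:P * 'X).
Proof.
elim=> [|_ [d [x [d_LND ->]]]|u v _ HDu _ HDv|r u _ HDu].
- by rewrite mul0r; apply: HDstar0.
- exact: HDstar_LND_mulX.
- by rewrite polyCD mulrDl; apply: sg_add.
- by rewrite polyCM -mulrA; apply: sg_mul (HDstar_polyC r) HDu.
Qed.

End HDstarOfCylinder.

Theorem proposition1 (K : closedFieldType) (hchar : [pchar K] =i pred0)
    (A : idomainType) (phi : {rmorphism K -> A})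
    (hfg : fin_gen_alg phi) :
  (forall a : A, LND_image_ideal phi a) ->
  forall p : {poly A}, HDstar (fun k : K => (phi k)%:P) p.
Proof.
move=> LND_image_full.
have HD_X := HDstar_LND_image_mulX hchar (LND_image_full 1).
rewrite mul1r in HD_X.
elim/poly_ind => [|p c HD_p]; first exact: HDstar0.
exact: (sg_add (sg_mul HD_p HD_X) (HDstar_polyC phi c)).
Qed.
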